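(* Let $m$ be a positive integer and let $0\le a<m$ be an integer that is a sum of $3$ squares modulo $m$ (i.e. $z_1^2+z_2^2+z_3^2\equiv a\pmod m$ for some integers $z_i$). Then there exists a square-free integer $a'\in[1,5m]$ such that $a'$ is a sum of $3$ squares modulo $m$ and such that the following implication holds: if there exist a constant $c>0$ and infinitely many positive integers $n'\equiv a' \pmod m$ with $r_3(n')\ge c\sqrt{n'}\log\log n'$, then there exist a constant $c'>0$ depending only on $c$ and $m$ and infinitely many positive integers $n\equiv a\pmod m$ with $r_3(n)\ge c'\sqrt{n}\log\log n$.
   Context: For a positive integer $n$, $r_3(n) := |\{(x,y,z)\in\mathbb{Z}^3 : x^2+y^2+z^2=n\}|$. *)

From Stdlib Require Import ZArith Reals List.
Import ListNotations.
Open Scope Z_scope.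

Definition zrange (k : Z) : list Z :=
  map (fun i => Z.of_nat i - k) (seq 0 (Z.to_nat (2 * k + 1))).

(* r_3(n) = #{(x,y,z) in Z^3 : x^2+y^2+z^2 = n}.  Any solution has
   |x|,|y|,|z| <= n, so it suffices to search the box [-n,n]^3. *)
Definition r3 (n : Z) : nat :=
  length (filter (fun t : Z * Z * Z =>
                    let '(x, y, z) := t in Z.eqb (x*x + y*y + z*z) n)
                 (list_prod (list_prod (zrange n) (zrange n)) (zrange n))).

Definition sum3sq_mod (m a : Z) : Prop :=
  exists z1 z2 z3 : Z, (z1^2 + z2^2 + z3^2) mod m = a mod m.

Definition squarefree (a : Z) : Prop :=
  forall d : Z, (d * d | a) -> d * d = 1.

Definition inf_many_large (m b : Z) (c : R) : Prop :=
  forall N : Z, exists n : Z, N < n /\ 0 < n /\ n mod m = b mod m /\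
    (INR (r3 n) >= c * sqrt (IZR n) * ln (ln (IZR n)))%R.

(* Write a = n (mod m) with n = z1^2 + z2^2 + z3^2 >= 1 and n = d^2 s, s squarefree; by
   Davenport-Cassels s is itself a sum of three integer squares.  Split m = M1 M2 coprimely
   so that M2 collects the primes dividing s and dividing m exactly once, and choose by CRT
   x in [1, m] with x = s (mod M1), x = 1 (mod M2).  No prime whose square divides x divides
   m, so x = e^2 a' with a' squarefree and e invertible mod m; hence a' is a sum of three
   squares mod m and K^2 a' = a (mod m) for some K in [1, m].  Finally
   r3(K^2 n') >= r3(n') and sqrt(K^2 n') loglog(K^2 n') <= 2 K sqrt(n') loglog(n') once
   n' >= max(K^2, 9), so the bound passes from the class of a' to that of a with the
   constant c / (2 m). *)

From Stdlib Require Import ZArith Reals List Lia Lra Psatz FinFun Znumtheory Classical.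
Open Scope Z_scope.

(* Zdiv declares these instances inside a section only; they make [rewrite] work modulo N. *)
#[local] Existing Instances eqm_setoid Zplus_eqm Zminus_eqm Zmult_eqm.

Lemma in_zrange k x : 0 <= k -> In x (zrange k) <-> -k <= x <= k.
Proof.
  intros Hk. unfold zrange. rewrite in_map_iff. split.
  - intros [i [<- Hi]]. apply in_seq in Hi. lia.
  - intros H. exists (Z.to_nat (x + k)). split; [lia | apply in_seq; lia].
Qed.

Lemma NoDup_zrange k : NoDup (zrange k).
Proof.
  apply Injective_map_NoDup; [intros i j E; lia | apply seq_NoDup].
Qed.

Lemma NoDup_list_prod {A B : Type} (l1 : list A) (l2 : list B) :
  NoDup l1 -> NoDup l2 -> NoDup (list_prod l1 l2).
Proof.
  intros H1 H2. induction H1 as [|a l1 Ha Hl IH]; simpl; [constructor|].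
  apply NoDup_app; auto.
  - apply Injective_map_NoDup; auto. intros x y E. now inversion E.
  - intros [u v] Hin Hin2. apply in_map_iff in Hin. destruct Hin as [w [E _]].
    inversion E; subst. apply in_prod_iff in Hin2. tauto.
Qed.

Lemma r3_le_mul_square n K : 0 <= n -> 1 <= K -> (r3 n <= r3 (K * K * n))%nat.
Proof.
  intros Hn HK. unfold r3.
  set (scale := fun t : Z * Z * Z => let '(x, y, z) := t in (K * x, K * y, K * z)).
  set (L := filter _ _).
  rewrite <- (length_map scale L).
  apply NoDup_incl_length.
  - apply Injective_map_NoDup.
    + intros [[x y] z] [[x' y'] z'] E. simpl in E. inversion E.
      assert (x = x') by nia. assert (y = y') by nia. assert (z = z') by nia. now subst.
    + apply NoDup_filter. repeat apply NoDup_list_prod; apply NoDup_zrange.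
  - intros t Ht. apply in_map_iff in Ht. destruct Ht as [[[x y] z] [<- Ht]].
    apply filter_In in Ht. destruct Ht as [Hin Heq]. apply Z.eqb_eq in Heq.
    rewrite !in_prod_iff, !in_zrange in Hin by lia.
    apply filter_In. simpl. split.
    + rewrite !in_prod_iff, !in_zrange by nia. nia.
    + apply Z.eqb_eq. nia.
Qed.

Section Growth.
Local Open Scope R_scope.

Lemma ln_le x y : 0 < x -> x <= y -> ln x <= ln y.
Proof.
  intros Hx [Hxy | <-]; [left; apply ln_increasing | right]; auto.
Qed.

Lemma ln_ln_mul_le k X : 1 <= k -> k * k <= X -> 9 <= X ->
  ln (ln (k * k * X)) <= 2 * ln (ln X).
Proof.
  intros Hk HkX HX.
  assert (HlnX : 2 <= ln X).
  { assert (exp 2 <= 9).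
    { replace 2 with (1 + 1) by ring. rewrite exp_plus.
      pose proof exp_le_3. pose proof (exp_pos 1). nra. }
    rewrite <- (ln_exp 2). apply ln_le; [apply exp_pos | lra]. }
  assert (Hln2 : ln 2 <= ln (ln X)) by (apply ln_le; lra).
  assert (H : ln (k * k * X) <= 2 * ln X).
  { rewrite ln_mult; [|nra|lra]. assert (ln (k * k) <= ln X) by (apply ln_le; nra). lra. }
  assert (Hlnln : ln (ln (k * k * X)) <= ln (2 * ln X)).
  { apply ln_le; [|exact H]. rewrite <- ln_1. apply ln_increasing; nra. }
  rewrite (ln_mult 2 (ln X)) in Hlnln by lra. lra.
Qed.

Lemma sqrt_lnln_mul_square_le (c M k X : R) : 0 < c -> 1 <= k <= M -> k * k <= X -> 9 <= X ->
  c / (2 * M) * sqrt (k * k * X) * ln (ln (k * k * X)) <= c * sqrt X * ln (ln X).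
Proof.
  intros Hc [Hk1 HkM] HkX HX.
  assert (HL : 0 <= ln (ln X)).
  { rewrite <- ln_1. apply ln_le; [lra|]. rewrite <- ln_exp with 1.
    apply ln_le; [apply exp_pos|]. pose proof exp_le_3. lra. }
  pose proof (ln_ln_mul_le k X Hk1 HkX HX).
  rewrite sqrt_mult, sqrt_square by nra.
  pose proof (sqrt_pos X).
  assert (Hck : 0 <= c / (2 * M) * k <= c / 2).
  { split; [apply Rmult_le_pos; [apply Rlt_le, Rdiv_lt_0_compat|]; lra|].
    apply (Rmult_le_reg_r (2 * M)); [lra|]. field_simplify; nra. }
  replace (c / (2 * M) * (k * sqrt X)) with (c / (2 * M) * k * sqrt X) by ring.
  apply Rle_trans with (c / (2 * M) * k * sqrt X * (2 * ln (ln X))).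
  - apply Rmult_le_compat_l; [apply Rmult_le_pos|]; lra.
  - replace (c / (2 * M) * k * sqrt X * (2 * ln (ln X)))
      with (c / (2 * M) * k * 2 * (sqrt X * ln (ln X))) by ring.
    replace (c * sqrt X * ln (ln X)) with (c * (sqrt X * ln (ln X))) by ring.
    apply Rmult_le_compat_r; [apply Rmult_le_pos|]; lra.
Qed.

End Growth.

Lemma eqm_divide N a b : N <> 0 -> eqm N a b <-> (N | a - b).
Proof.
  intros HN. unfold eqm. split.
  - intros H. exists (a / N - b / N).
    pose proof (Z_div_mod_eq_full a N). pose proof (Z_div_mod_eq_full b N). lia.
  - intros [t Ht]. replace a with (b + t * N) by lia. apply Z_mod_plus_full.
Qed.

Lemma eqm_divisor M N a b : 0 < M -> 0 < N -> (M | N) -> eqm N a b -> eqm M a b.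
Proof.
  unfold eqm. intros HM HN HMN H. now rewrite (Zmod_div_mod M N a), (Zmod_div_mod M N b), H.
Qed.

Lemma eqm_mul_rel_prime M1 M2 a b : 0 < M1 -> 0 < M2 -> rel_prime M1 M2 ->
  eqm M1 a b -> eqm M2 a b -> eqm (M1 * M2) a b.
Proof.
  intros H1 H2 Hrp Ha Hb. apply eqm_divide in Ha, Hb; try lia. apply eqm_divide; [lia|].
  destruct Ha as [t Ht]. rewrite Ht, Z.mul_comm in Hb.
  destruct (Gauss M2 M1 t Hb (rel_prime_sym _ _ Hrp)) as [t' ->].
  exists t'. rewrite Ht. ring.
Qed.

Lemma chinese_remainder M1 M2 b1 b2 : rel_prime M1 M2 ->
  exists x, eqm M1 x b1 /\ eqm M2 x b2.
Proof.
  intros Hrp. destruct (rel_prime_bezout _ _ Hrp) as [u v Huv].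
  exists (b1 + (b2 - b1) * u * M1). unfold eqm. split.
  - apply Z_mod_plus_full.
  - replace (b1 + (b2 - b1) * u * M1) with (b2 + (b1 - b2) * v * M2).
    { apply Z_mod_plus_full. }
    rewrite <- !Z.mul_assoc, (proj1 (Z.add_move_r _ _ _) Huv). ring.
Qed.

Lemma eqm_representative m t : 0 < m -> exists r, 1 <= r <= m /\ eqm m r t.
Proof.
  intros Hm. exists ((t - 1) mod m + 1). split.
  - pose proof (Z.mod_pos_bound (t - 1) m Hm). lia.
  - unfold eqm. rewrite Z.add_mod_idemp_l by lia. f_equal. ring.
Qed.

Lemma eqm_inverse m d : rel_prime d m -> exists i, eqm m (i * d) 1.
Proof.
  intros Hrp. destruct (rel_prime_bezout _ _ Hrp) as [u v Huv].
  exists u. unfold eqm. replace (u * d) with (1 + (- v) * m) by lia. apply Z_mod_plus_full.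
Qed.

Lemma exists_prime_divisor n : 1 < n -> exists p, prime p /\ (p | n).
Proof.
  intros Hn. pattern n. apply (Zlt_lower_bound_ind _ 2); [clear n Hn; intros n IH Hn | lia].
  destruct (prime_dec n) as [Hp | Hp].
  - exists n. split; [exact Hp | apply Z.divide_refl].
  - destruct (not_prime_divide n ltac:(lia) Hp) as [d [Hd Hdn]].
    destruct (IH d ltac:(lia)) as [p [Hp' Hpd]].
    exists p. split; [exact Hp' | eapply Z.divide_trans; eauto].
Qed.

Lemma rel_prime_of_no_common_prime a b :
  (forall p, prime p -> (p | a) -> (p | b) -> False) -> rel_prime a b.
Proof.
  intros H. apply Zgcd_1_rel_prime.
  pose proof (Z.gcd_nonneg a b) as Hg.
  destruct (Z_0_1_more _ Hg) as [Hg0 | [Hg1 | Hg1]]; [exfalso | exact Hg1 | exfalso].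
  - apply Z.gcd_eq_0 in Hg0. destruct Hg0 as [-> ->].
    apply (H 2 prime_2); apply Z.divide_0_r.
  - destruct (exists_prime_divisor _ Hg1) as [p [Hp Hpg]].
    apply (H p Hp); eapply Z.divide_trans; eauto; [apply Z.gcd_divide_l | apply Z.gcd_divide_r].
Qed.

Lemma squarefree_prime_square s p : squarefree s -> prime p -> ~ (p * p | s).
Proof. intros Hs Hp Hd. apply Hs in Hd. pose proof (prime_ge_2 p Hp). nia. Qed.

Lemma squarefree_decomposition x : 1 <= x ->
  exists d s, 1 <= d /\ x = d * d * s /\ squarefree s.
Proof.
  intros Hx. pattern x. apply (Zlt_lower_bound_ind _ 1); [clear x Hx; intros x IH Hx | lia].
  destruct (classic (squarefree x)) as [Hs | Hs].
  - exists 1, x. repeat split; [lia | ring | exact Hs].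
  - apply not_all_ex_not in Hs. destruct Hs as [q Hq].
    apply imply_to_and in Hq. destruct Hq as [[t Ht] Hq].
    assert (2 <= q * q) by (destruct (Z.eq_dec q 0); subst; nia).
    destruct (IH t ltac:(nia)) as [d [s [Hd [-> Hsf]]]].
    exists (Z.abs q * d), s. repeat split; [nia | | exact Hsf].
    rewrite Ht, <- (Z.abs_square q). ring.
Qed.

Definition sum3sq (n : Z) : Prop := exists y1 y2 y3, n = y1 * y1 + y2 * y2 + y3 * y3.

Lemma nearest_multiple D w : 0 < D -> exists u, - D <= 2 * (w - D * u) <= D.
Proof.
  intros HD. exists ((2 * w + D) / (2 * D)).
  pose proof (Z_div_mod_eq_full (2 * w + D) (2 * D)).
  pose proof (Z.mod_pos_bound (2 * w + D) (2 * D)). lia.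
Qed.

Lemma davenport_cassels_step D s w1 w2 w3 : 0 < D ->
  w1 * w1 + w2 * w2 + w3 * w3 = s * (D * D) ->
  sum3sq s \/ exists D' v1 v2 v3, 0 < D' < D /\ v1 * v1 + v2 * v2 + v3 * v3 = s * (D' * D').
Proof.
  intros HD Hw.
  destruct (nearest_multiple D w1 HD) as [u1 B1].
  destruct (nearest_multiple D w2 HD) as [u2 B2].
  destruct (nearest_multiple D w3 HD) as [u3 B3].
  (* The line through w / D and u = round (w / D) meets the sphere |y|^2 = s again at a
     rational point whose denominator D' = |w - D u|^2 / D is smaller than D. *)
  set (e1 := w1 - D * u1) in *. set (e2 := w2 - D * u2) in *. set (e3 := w3 - D * u3) in *.
  set (D' := s * D - 2 * (w1 * u1 + w2 * u2 + w3 * u3) + D * (u1 * u1 + u2 * u2 + u3 * u3)).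
  assert (Hr : e1 * e1 + e2 * e2 + e3 * e3 = D * D').
  { transitivity (w1 * w1 + w2 * w2 + w3 * w3 - s * (D * D) + D * D');
      [unfold e1, e2, e3, D'; ring | lia]. }
  assert (HD' : 0 <= D') by nia.
  destruct (Z.eq_dec D' 0) as [HD'0 | HD'0].
  - left. exists u1, u2, u3.
    rewrite HD'0 in Hr. assert (e1 = 0 /\ e2 = 0 /\ e3 = 0) as (He1 & He2 & He3) by nia.
    assert (Hw' : D * D * (u1 * u1 + u2 * u2 + u3 * u3) = D * D * s).
    { transitivity (w1 * w1 + w2 * w2 + w3 * w3); [|lia]. unfold e1, e2, e3 in *.
      replace w1 with (D * u1) by lia. replace w2 with (D * u2) by lia.
      replace w3 with (D * u3) by lia. ring. }
    apply Z.mul_reg_l in Hw'; nia.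
  - right. set (c := u1 * u1 + u2 * u2 + u3 * u3 - s).
    exists D', (D' * u1 + c * e1), (D' * u2 + c * e2), (D' * u3 + c * e3). split; [nia|].
    transitivity (D' * D' * (u1 * u1 + u2 * u2 + u3 * u3)
                  + 2 * D' * c * (u1 * e1 + u2 * e2 + u3 * e3) + c * c * (D * D')).
    + rewrite <- Hr. ring.
    + unfold c, D', e1, e2, e3. ring.
Qed.

Lemma davenport_cassels D s : 0 < D -> sum3sq (s * (D * D)) -> sum3sq s.
Proof.
  intros HD. pattern D. apply (Zlt_lower_bound_ind _ 1); [clear D HD; intros D IH HD | lia].
  intros [w1 [w2 [w3 Hw]]].
  destruct (davenport_cassels_step D s w1 w2 w3 ltac:(lia) (eq_sym Hw))
    as [Hs | [D' [v1 [v2 [v3 [HD' Hv]]]]]]; [exact Hs|].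
  apply (IH D'); [lia|]. now exists v1, v2, v3.
Qed.

Lemma sum3sq_modE m a :
  sum3sq_mod m a <-> exists y1 y2 y3, eqm m (y1 * y1 + y2 * y2 + y3 * y3) a.
Proof.
  unfold sum3sq_mod, eqm. split; intros [y1 [y2 [y3 H]]]; exists y1, y2, y3;
    rewrite <- H; f_equal; ring.
Qed.

Lemma sum3sq_mod_eqm m a b : eqm m a b -> sum3sq_mod m b -> sum3sq_mod m a.
Proof.
  intros Hab Hb. apply sum3sq_modE in Hb as [y1 [y2 [y3 Hy]]].
  apply sum3sq_modE. exists y1, y2, y3. now rewrite Hy, Hab.
Qed.

Lemma sum3sq_mod_mul_square m i x : sum3sq_mod m x -> sum3sq_mod m (i * i * x).
Proof.
  intros Hx. apply sum3sq_modE in Hx as [y1 [y2 [y3 Hy]]].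
  apply sum3sq_modE. exists (i * y1), (i * y2), (i * y3).
  rewrite <- Hy. unfold eqm. f_equal. ring.
Qed.

Lemma sum3sq_mod_positive_representative m a : 0 < m -> sum3sq_mod m a ->
  exists n, 1 <= n /\ sum3sq n /\ eqm m n a.
Proof.
  intros Hm Ha. apply sum3sq_modE in Ha as [y1 [y2 [y3 Hy]]].
  pose proof (Z.mod_pos_bound y1 m Hm).
  exists ((y1 mod m + m) * (y1 mod m + m) + y2 * y2 + y3 * y3). split; [nia|split].
  - eexists _, _, _. reflexivity.
  - rewrite <- Hy. assert (Hy1 : eqm m (y1 mod m + m) y1).
    { rewrite (Zmod_eqm m y1). unfold eqm. rewrite <- (Z_mod_plus_full y1 1 m). f_equal. ring. }
    now rewrite Hy1.
Qed.

Lemma split_modulus m s : 0 < m -> squarefree s ->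
  exists M1 M2, 0 < M1 /\ 0 < M2 /\ m = M1 * M2 /\ rel_prime M1 M2 /\ (M2 | s) /\
    (forall p, prime p -> (p | M1) -> (p | s) -> (p * p | M1)).
Proof.
  intros Hm Hs.
  (* With g = gcd s m and h = gcd g (m / g), take M1 = (m / g) h and M2 = g / h. *)
  set (g := Z.gcd s m). destruct (Z.gcd_divide_r s m) as [m1 Hm1]. fold g in Hm1.
  set (h := Z.gcd g m1). destruct (Z.gcd_divide_l g m1) as [M2 HM2]. fold h in HM2.
  assert (Hg : 0 <= g) by apply Z.gcd_nonneg. assert (Hh : 0 <= h) by apply Z.gcd_nonneg.
  assert (0 < g /\ 0 < m1) as [Hg0 Hm10].
  { assert (H0 : 0 < m1 * g) by lia. apply Z.lt_0_mul in H0. lia. }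
  assert (0 < h /\ 0 < M2) as [Hh0 HM20].
  { assert (H0 : 0 < M2 * h) by lia. apply Z.lt_0_mul in H0. lia. }
  assert (Hgs : (g | s)) by apply Z.gcd_divide_l.
  assert (Hhm1 : (h | m1)) by apply Z.gcd_divide_r.
  assert (HM2s : (M2 | s)) by (eapply Z.divide_trans; [|exact Hgs]; exists h; lia).
  assert (Hm1p : forall p, prime p -> (p | m1 * h) -> (p | m1)).
  { intros p Hp Hpd. destruct (prime_mult p Hp _ _ Hpd) as [Hpm1 | Hph]; [exact Hpm1|].
    eapply Z.divide_trans; eauto. }
  assert (Hhp : forall p, (p | m1) -> (p | s) -> (p | h)).
  { intros p Hpm1 Hps. apply Z.gcd_greatest; [|exact Hpm1].
    apply Z.gcd_greatest; [exact Hps|]. rewrite Hm1. now apply Z.divide_mul_l. }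
  exists (m1 * h), M2. split; [nia|]. split; [exact HM20|].
  split; [rewrite Hm1, HM2; ring|]. split; [|split; [exact HM2s|]].
  - apply rel_prime_of_no_common_prime. intros p Hp HpM1 HpM2.
    assert (HpM2s : (p | s)) by (eapply Z.divide_trans; eauto).
    apply (squarefree_prime_square s p Hs Hp). eapply Z.divide_trans; [|exact Hgs].
    rewrite HM2. destruct HpM2 as [a ->]. destruct (Hhp p (Hm1p p Hp HpM1) HpM2s) as [b Hb].
    rewrite Hb. exists (a * b). ring.
  - intros p Hp HpM1 Hps. pose proof (Hm1p p Hp HpM1) as [a Ha].
    destruct (Hhp p ltac:(now exists a) Hps) as [b Hb]. rewrite Ha, Hb. exists (a * b). ring.
Qed.

Definition square_part_coprime (x m : Z) : Prop :=
  forall p, prime p -> (p * p | x) -> ~ (p | m).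

Lemma square_part_coprime_of_crt M1 M2 s x : 0 < M1 -> 0 < M2 -> squarefree s ->
  (forall p, prime p -> (p | M1) -> (p | s) -> (p * p | M1)) ->
  eqm M1 x s -> eqm M2 x 1 -> square_part_coprime x (M1 * M2).
Proof.
  intros HM1 HM2 Hs HM1s Hxs Hx1 p Hp Hppx Hpm.
  apply eqm_divide in Hxs, Hx1; try lia.
  assert (Hpx : (p | x)) by (eapply Z.divide_trans; [apply Z.divide_factor_l | exact Hppx]).
  destruct (prime_mult p Hp _ _ Hpm) as [HpM1 | HpM2].
  - assert (Hps : (p | s)).
    { replace s with (x - (x - s)) by ring.
      apply Z.divide_sub_r; [exact Hpx | eapply Z.divide_trans; eauto]. }
    apply (squarefree_prime_square s p Hs Hp). replace s with (x - (x - s)) by ring.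
    apply Z.divide_sub_r; [exact Hppx | eapply Z.divide_trans; [apply HM1s|]; eauto].
  - assert (Hp1 : (p | 1)).
    { replace 1 with (x - (x - 1)) by ring.
      apply Z.divide_sub_r; [exact Hpx | eapply Z.divide_trans; eauto]. }
    apply Z.divide_1_r in Hp1. pose proof (prime_ge_2 p Hp). lia.
Qed.

Lemma exists_bounded_twist m s d : 0 < m -> squarefree s -> sum3sq s ->
  exists x k, 1 <= x <= m /\ sum3sq_mod m x /\ square_part_coprime x m /\
    eqm m (k * k * x) (d * d * s).
Proof.
  intros Hm Hs [y1 [y2 [y3 Hy]]].
  destruct (split_modulus m s Hm Hs) as (M1 & M2 & HM1 & HM2 & -> & Hrp & HM2s & HM1s).
  destruct (chinese_remainder M1 M2 s 1 Hrp) as (x0 & Hx0s & Hx01).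
  destruct (eqm_representative (M1 * M2) x0 Hm) as (x & Hx & Hxx0).
  assert (HxM1 : eqm M1 x s).
  { rewrite <- Hx0s. apply (eqm_divisor M1 (M1 * M2)); auto. apply Z.divide_factor_l. }
  assert (HxM2 : eqm M2 x 1).
  { rewrite <- Hx01. apply (eqm_divisor M2 (M1 * M2)); auto. apply Z.divide_factor_r. }
  (* Modulo M1 the witnesses copy (y, d); modulo M2 they are (1, 0, 0) and 0, matching
     x = 1 and d^2 s = 0 there. *)
  destruct (chinese_remainder M1 M2 y1 1 Hrp) as (w1 & Hw1 & Hw1').
  destruct (chinese_remainder M1 M2 y2 0 Hrp) as (w2 & Hw2 & Hw2').
  destruct (chinese_remainder M1 M2 y3 0 Hrp) as (w3 & Hw3 & Hw3').
  destruct (chinese_remainder M1 M2 d 0 Hrp) as (k & Hk & Hk').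
  exists x, k. split; [exact Hx|]. split; [|split].
  - apply sum3sq_modE. exists w1, w2, w3. apply eqm_mul_rel_prime; auto.
    + rewrite Hw1, Hw2, Hw3, HxM1, Hy. reflexivity.
    + rewrite Hw1', Hw2', Hw3', HxM2. reflexivity.
  - exact (square_part_coprime_of_crt M1 M2 s x HM1 HM2 Hs HM1s HxM1 HxM2).
  - apply eqm_mul_rel_prime; auto.
    + rewrite Hk, HxM1. reflexivity.
    + assert (Hs0 : eqm M2 s 0) by (apply eqm_divide; [lia | now rewrite Z.sub_0_r]).
      rewrite Hk', Hs0. unfold eqm. f_equal. ring.
Qed.

Lemma sum3sq_mod_squarefree_part m x : 1 <= x -> sum3sq_mod m x -> square_part_coprime x m ->
  exists a' e, squarefree a' /\ 1 <= a' <= x /\ sum3sq_mod m a' /\ x = e * e * a'.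
Proof.
  intros Hx Hsx Hcop.
  destruct (squarefree_decomposition x Hx) as (e & a' & He & Hxe & Ha').
  assert (Hrp : rel_prime e m).
  { apply rel_prime_of_no_common_prime. intros p Hp [b Hb] Hpm.
    apply (Hcop p Hp); [|exact Hpm]. exists (b * b * a'). rewrite Hxe, Hb. ring. }
  destruct (eqm_inverse m e Hrp) as [i Hi].
  assert (1 <= e * e) by nia.
  exists a', e. split; [exact Ha'|]. split; [nia|]. split; [|exact Hxe].
  apply (sum3sq_mod_eqm m a' (i * i * x)); [|now apply sum3sq_mod_mul_square].
  replace (i * i * x) with (i * e * (i * e) * a') by (rewrite Hxe; ring).
  rewrite Hi. unfold eqm. f_equal. ring.
Qed.

Lemma exists_squarefree_square_twist m a : 0 < m -> sum3sq_mod m a ->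
  exists a' K, squarefree a' /\ 1 <= a' <= m /\ sum3sq_mod m a' /\ 1 <= K <= m /\
    eqm m (K * K * a') a.
Proof.
  intros Hm Ha.
  destruct (sum3sq_mod_positive_representative m a Hm Ha) as (n & Hn & Hsn & Hna).
  destruct (squarefree_decomposition n Hn) as (d & s & Hd & Hnds & Hs).
  assert (Hss : sum3sq s).
  { apply (davenport_cassels d); [lia|]. now replace (s * (d * d)) with n by (rewrite Hnds; ring). }
  destruct (exists_bounded_twist m s d Hm Hs Hss) as (x & k & Hx & Hsx & Hcop & Hkx).
  destruct (sum3sq_mod_squarefree_part m x ltac:(lia) Hsx Hcop) as (a' & e & Ha' & Ha'x & Hsa' & Hxe).
  destruct (eqm_representative m (k * e) Hm) as (K & HK & HKke).
  exists a', K. split; [exact Ha'|]. split; [lia|]. split; [exact Hsa'|]. split; [exact HK|].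
  rewrite HKke, <- Hna, Hnds, <- Hkx, Hxe. unfold eqm. f_equal. ring.
Qed.

Lemma inf_many_large_mul_square m a' a K : 0 < m -> 1 <= K <= m -> eqm m (K * K * a') a ->
  forall c, (0 < c)%R -> inf_many_large m a' c -> inf_many_large m a (c / (2 * IZR m)).
Proof.
  intros Hm HK HKa c Hc Hlarge N.
  destruct (Hlarge (Z.max N (Z.max (K * K) 9))) as (n & HnN & Hn & Hna' & Hr).
  change (eqm m n a') in Hna'.
  exists (K * K * n). split; [nia|]. split; [nia|]. split.
  - change (eqm m (K * K * n) a). rewrite Hna'. exact HKa.
  - apply Rle_ge. eapply Rle_trans; [|apply le_INR, (r3_le_mul_square n K); lia].
    eapply Rle_trans; [|apply Rge_le, Hr]. rewrite !mult_IZR.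
    apply sqrt_lnln_mul_square_le; [exact Hc | split | |]; rewrite <- ?mult_IZR; apply IZR_le; lia.
Qed.

Theorem lemma3p1 :
  forall m : Z, 0 < m ->
  exists cfun : R -> R,
    (forall c : R, (0 < c)%R -> (0 < cfun c)%R) /\
    forall a : Z, 0 <= a < m -> sum3sq_mod m a ->
      exists a' : Z,
        squarefree a' /\ 1 <= a' <= 5 * m /\ sum3sq_mod m a' /\
        forall c : R, (0 < c)%R ->
          inf_many_large m a' c -> inf_many_large m a (cfun c).
Proof.
  intros m Hm. exists (fun c => c / (2 * IZR m))%R. split.
  - intros c Hc. apply Rdiv_lt_0_compat; [exact Hc|]. apply IZR_lt in Hm. lra.
  - intros a _ Ha.
    destruct (exists_squarefree_square_twist m a Hm Ha) as (a' & K & Hsf & Ha' & Hsa' & HK & HKa).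
    exists a'. split; [exact Hsf|]. split; [lia|]. split; [exact Hsa'|].
    exact (inf_many_large_mul_square m a' a K Hm HK HKa).
Qed.
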